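(* Let $\alpha\in(0,1]$, $r\in\mathbb{N}$, $\gamma=\alpha/(4\alpha+4d)$, $\mathcal{D}$ a dyadic grid, and let $S',R\in\mathcal{D}$ with $S'\subset R$ and $S'$ $r$-good. Let $x\in S'$, $t\in(\ell R/2,\ell R)$, and let $Q\in\mathcal{D}$ with $Q\supset S'$. Then there exists $\eta>0$ (depending only on $\alpha,d$) such that \[ K_t^{S'}\mathbf{1}_{\mathbb{R}^d\setminus Q}(x)\lesssim\left(\frac{\ell S'}{\max(\ell R^{(r)},\ell Q)}\right)^\eta,\qquad K_t^{S'}\mathbf{1}_Q(x)\lesssim\frac{|Q|}{|R|}\left(\frac{\ell S'}{\ell R}\right)^{\alpha/2}, \] with implicit constants depending only on $\alpha,d,r$.
   Context: $\mathbb{R}^d$ carries the $\ell^\infty$ metric. A dyadic grid is the standard grid $\mathcal{D}^0=\bigcup_j\{2^{-j}([0,1)^d+m):m\in\mathbb{Z}^d\}$ or a translate $\mathcal{D}^\omega=\{R+\sum_{i>j}\omega_i2^{-i}:R\in\mathcal{D}^0,\ \ell R=2^{-j}\}$. $R^{(r)}$ is the $r$-th dyadic ancestor of $R$. A cube $S'\in\mathcal{D}$ is $r$-good if $\operatorname{d}(S',\partial P)>(\ell S')^\gamma(\ell P)^{1-\gamma}$ for every $P\in\mathcal{D}$ with $\ell P\ge2^r\ell S'$. With $x_{S'}$ the centre of $S'$, \[K_t^{S'}f(x)=\int_{\mathbb{R}^d}\frac{(t|x-x_{S'}|)^{\alpha/2}}{(t+|x-y|)^{\alpha+d}}|f(y)|\,\mathrm{d}y.\]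 *)

From HB Require Import structures.
From mathcomp Require Import all_boot all_order all_algebra.
From mathcomp Require Import all_classical all_reals all_analysis.
Import Order.TTheory GRing.Theory Num.Theory.
Import numFieldNormedType.Exports.
Local Open Scope classical_set_scope.
Local Open Scope ring_scope.

(* Points of R^d are row vectors 'rV[R]_d; their canonical norm `|x| is the
   max (l^infty) norm mx_norm, so the metric is the l^infty metric. *)

(* Lebesgue integral on R^d of a nonnegative \bar R-valued function, written
   out as the iterated (Tonelli) integral of one-dimensional Lebesgue
   integrals, coordinate by coordinate. *)
Fixpoint int_Rd (R : realType) (n : nat) : ('rV[R]_n -> \bar R) -> \bar R :=
  match n return ('rV[R]_n -> \bar R) -> \bar R with
  | 0 => fun f => f 0
  | n'.+1 => fun f =>
      (\int[@lebesgue_measure R]_(s in [set: R])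
         int_Rd R n' (fun v => f (row_mx (\row_(_ < 1) s) v)))%E
  end.

(* A dyadic grid is given by omega = (omega_i)_{i in Z}, omega_i in {0,1}^d;
   omega = 0 gives the standard grid D^0. *)
Definition grid_param (d : nat) := int -> 'I_d -> bool.

Definition dshift (R : realType) (d : nat) (w : grid_param d) (j : int)
    : 'rV[R]_d :=
  \row_(c < d) limn (series (fun k : nat =>
      (w (j + (k.+1)%:Z) c)%:R * (2%:R : R) ^ (- (j + (k.+1)%:Z)))).

(* A dyadic cube of D^omega is encoded by its generation j (side 2^{-j})
   and its integer position m in Z^d. *)
Record dcube (d : nat) := DCube { dgen : int; dpos : 'I_d -> int }.

Definition side (R : realType) (d : nat) (P : dcube d) : R :=
  (2%:R : R) ^ (- dgen d P).

Definition cube_set (R : realType) (d : nat) (w : grid_param d) (P : dcube d)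
    : set 'rV[R]_d :=
  [set x | forall c : 'I_d,
      side R d P * (dpos d P c)%:~R + dshift R d w (dgen d P) 0 c <= x 0 c /\
      x 0 c < side R d P * ((dpos d P c)%:~R + 1) + dshift R d w (dgen d P) 0 c].

Definition centre (R : realType) (d : nat) (w : grid_param d) (P : dcube d)
    : 'rV[R]_d :=
  \row_(c < d) (side R d P * ((dpos d P c)%:~R + 2^-1) + dshift R d w (dgen d P) 0 c).

Definition boundary (R : realType) (d : nat) (A : set 'rV[R]_d) :=
  closure A `\` interior A.

(* l^infty distance between two sets, in \bar R (inf of the empty set = +oo) *)
Definition set_dist (R : realType) (d : nat) (A B : set 'rV[R]_d) : \bar R :=
  ereal_inf [set (`|x - y|)%:E | x in A & y in B].

Definition good (R : realType) (d : nat) (w : grid_param d) (gamma : R)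
    (r : nat) (S : dcube d) : Prop :=
  forall P : dcube d, (2%:R : R) ^+ r * side R d S <= side R d P ->
    ((side R d S `^ gamma * side R d P `^ (1 - gamma))%:E <
       set_dist R d (cube_set R d w S) (boundary R d (cube_set R d w P)))%E.

Definition Kop (R : realType) (d : nat) (w : grid_param d) (alpha t : R)
    (S : dcube d) (f : 'rV[R]_d -> R) (x : 'rV[R]_d) : \bar R :=
  int_Rd R d (fun y : 'rV[R]_d =>
    ((t * `|x - centre R d w S|) `^ (alpha / 2%:R)
      / (t + `|x - y|) `^ (alpha + d%:R) * `|f y|)%:E).

From HB Require Import structures.
From mathcomp Require Import all_boot all_order all_algebra.
From mathcomp Require Import all_classical all_reals all_analysis.
From mathcomp Require Import measurable_realfun ring lra.
Import Order.TTheory GRing.Theory Num.Theory.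
Import numFieldNormedType.Exports.
Local Open Scope classical_set_scope.
Local Open Scope ring_scope.

(* The kernel decays like (t + |x - y|)^-(alpha + d).  Splitting this as
   (t + |x - y|)^-(alpha/2) times prod_i (t + |y_i - x_i|)^-(1 + alpha/(2d)), the
   product integrates to a multiple of t^-(alpha/2); hence, as |x - x_S'| <= l(S'),
   if f vanishes within distance m of x then K_t^S' f(x) <~ (l(S')/m)^(alpha/2).
   Off Q we take m = t ~ l(R) when l(Q) <= 2^r l(R), and otherwise
   m = l(S')^gamma l(Q)^(1-gamma), which r-goodness of S' puts below the distance
   from x to the boundary of Q, hence to the complement of Q; as gamma <= 1/2 both
   cases give the exponent alpha/4.  On Q the kernel is at most
   (t l(S'))^(alpha/2) t^-(alpha+d), and Q has volume l(Q)^d. *)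

Section iterated_integral.
Variable R : realType.
Local Notation mu := (@lebesgue_measure R).

(* The inner integrals of [int_Rd] are not known to be measurable, so
   monotonicity has to come from the definition as a supremum. *)
Lemma ge0_le_integralT (f g : R -> \bar R) :
  (forall s, (0 <= f s)%E) -> (forall s, (f s <= g s)%E) ->
  (\int[mu]_(s in [set: R]) f s <= \int[mu]_(s in [set: R]) g s)%E.
Proof.
move=> f0 fg; have g0 s : (0 <= g s)%E by apply: le_trans (f0 s) (fg s).
rewrite !ge0_integralTE//; apply: ereal_sup_le => _ [h hf <-].
by exists h => //= s; apply: le_trans (hf s) (fg s).
Qed.

Lemma int_Rd_ge0 n (f : 'rV[R]_n -> \bar R) :
  (forall y, (0 <= f y)%E) -> (0 <= int_Rd R n f)%E.
Proof.
elim: n f => [|n IH] f f0 /=; first exact: f0.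
by apply: integral_ge0 => s _; apply: IH.
Qed.

Lemma le_int_Rd n (f g : 'rV[R]_n -> \bar R) :
  (forall y, (0 <= f y)%E) -> (forall y, (f y <= g y)%E) ->
  (int_Rd R n f <= int_Rd R n g)%E.
Proof.
elim: n f g => [|n IH] f g f0 fg /=; first exact: fg.
by apply: ge0_le_integralT => s; [apply: int_Rd_ge0 | apply: IH].
Qed.

Lemma int_Rd_prod n (k : R) (g : 'I_n -> R -> R) :
  0 <= k -> (forall c s, 0 <= g c s) -> (forall c, measurable_fun setT (g c)) ->
  int_Rd R n (fun y => (k * \prod_(c < n) g c (y 0 c))%:E) =
  (k%:E * \prod_(c < n) \int[mu]_(s in [set: R]) (g c s)%:E)%E.
Proof.
elim: n k g => [|n IH] k g k0 g0 mg /=; first by rewrite !big_ord0 mulr1 mule1.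
have row_mx0 (s : R) (v : 'rV_n) : row_mx (\row_(_ < 1) s) v 0 ord0 = s.
  by rewrite (_ : ord0 = lshift n (ord0 : 'I_1)) ?row_mxEl ?mxE//; apply: val_inj.
have row_mxS (s : R) (v : 'rV_n) (c : 'I_n) : row_mx (\row_(_ < 1) s) v 0 (lift ord0 c) = v 0 c.
  by rewrite (_ : lift ord0 c = rshift 1 c) ?row_mxEr//; apply: val_inj.
transitivity (\int[mu]_(s in [set: R])
    ((k * g ord0 s)%:E * \prod_(c < n) \int[mu]_(s in [set: R]) (g (lift ord0 c) s)%:E))%E.
  apply: eq_integral => s _; rewrite -IH ?mulr_ge0//.
  congr (int_Rd R n _); apply/funext => v.
  by rewrite big_ord_recl row_mx0 mulrA; under eq_bigr do rewrite row_mxS.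
have mg0 : measurable_fun setT (fun s : R => (k * g ord0 s)%:E).
  by apply/measurable_EFinP; apply: measurable_funM.
rewrite ge0_integralZr//; last 2 first.
- by move=> s _; rewrite lee_fin mulr_ge0.
- by apply: prode_ge0 => c _; apply: integral_ge0 => s _; rewrite lee_fin.
rewrite big_ord_recl muleA; congr (_ * _)%E.
under eq_integral do rewrite EFinM.
apply: ge0_integralZl => //; first by apply/measurable_EFinP; exact: mg.
by move=> s _; rewrite lee_fin.
Qed.

End iterated_integral.

Section one_dimensional_integrals.
Variable R : realType.
Local Notation mu := (@lebesgue_measure R).

Lemma is_derive_powR_shift (e p x : R) : 0 < x + e ->
  is_derive x 1 (fun s => (s + e) `^ p) (p * (x + e) `^ (p - 1)).
Proof.
move=> xe; rewrite -[X in is_derive _ _ _ X]mulr1.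
change (is_derive x 1 ((@powR R ^~ p) \o shift e) (p * (x + e) `^ (p - 1) * 1)).
by apply: is_derive1_comp; [exact: is_derive1_powR | exact: is_derive_shift].
Qed.

Lemma continuous_powR_shift (e p x : R) : 0 < x + e ->
  {for x, continuous (fun s => (s + e) `^ p)}.
Proof.
move=> xe; have [dF _] := @is_derive_powR_shift e p x xe.
exact/differentiable_continuous/derivable1_diffP.
Qed.

Lemma powR_shift_cvgy (e q : R) : q < 0 -> (s + e) `^ q @[s --> +oo] --> 0.
Proof.
move=> q0; apply/cvgrPdist_lt => eps eps0.
exists (expR (ln eps / q) - e); split; first exact: num_real.
move=> s Ms; have se : expR (ln eps / q) < s + e by rewrite -ltrBlDr.
have se0 : 0 < s + e by apply: lt_trans se; exact: expR_gt0.
rewrite sub0r normrN ger0_norm ?powR_ge0 // /powR gt_eqF //.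
rewrite -[ltRHS]lnK ?posrE // ltr_expR mulrC -ltr_ndivrMr //.
by rewrite -[ltLHS]expRK ltr_ln ?posrE ?expR_gt0.
Qed.

Lemma integral_powR_shift_itvy (b e p : R) : 0 < b + e -> 1 < p ->
  (\int[mu]_(s in `[b, +oo[) ((s + e) `^ (- p))%:E =
   ((b + e) `^ (1 - p) / (p - 1))%:E)%E.
Proof.
move=> be p1; have p10 : 0 < p - 1 by rewrite subr_gt0.
pose F s := (1 - p)^-1 * (s + e) `^ (1 - p).
have pos s : b <= s -> 0 < s + e by move=> bs; apply: lt_le_trans be _; rewrite lerD2r.
have dF s : b <= s -> is_derive s 1 F ((s + e) `^ (- p)).
  move=> /pos se; have := @is_derive_powR_shift e (1 - p) s se.
  move=> /(is_deriveZ (1 - p)^-1); rewrite /GRing.scale /= mulrA mulVf; last first.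
    by rewrite subr_eq0 eq_sym gt_eqF.
  by rewrite mul1r addrAC subrr add0r.
rewrite (@ge0_continuous_FTC2y _ _ F b 0).
- by rewrite sub0e /F -EFinN -mulNr -invrN opprB mulrC.
- by move=> s _; exact: powR_ge0.
- apply: continuous_in_subspaceT => s; rewrite inE /= in_itv /= andbT => bs.
  exact: continuous_powR_shift (pos _ bs).
- rewrite -[0](mulr0 (1 - p)^-1); apply: cvgM; first exact: cvg_cst.
  by apply: powR_shift_cvgy; rewrite subr_lt0.
- by move=> s /ltW /dF [].
- apply: cvg_at_right_filter; have [dFb _] := dF b (lexx b).
  exact/differentiable_continuous/derivable1_diffP.
- move=> s; rewrite in_itv /= andbT => /ltW /dF dFs.
  by rewrite derive1E derive_val.
Qed.

Lemma continuous_powR_dist (a t p : R) : 0 < t ->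
  continuous (fun s => (t + `|s - a|) `^ p).
Proof.
move=> t0 s.
have -> : (fun s => (t + `|s - a|) `^ p) = (fun u => (u + t) `^ p) \o (fun s => `|s - a|).
  by apply/funext => u; rewrite /= addrC.
apply: continuous_comp; last by apply: continuous_powR_shift; rewrite ltr_wpDl.
apply: continuous_comp; last exact: norm_continuous.
by apply: continuousB; [exact: cvg_id | exact: cst_continuous].
Qed.

Lemma integral_powR_dist (a t p : R) : 0 < t -> 1 < p ->
  (\int[mu]_(s in [set: R]) ((t + `|s - a|) `^ (- p))%:E =
   (2 / (p - 1) * t `^ (1 - p))%:E)%E.
Proof.
move=> t0 p1; set f := fun s : R => (t + `|s - a|) `^ (- p).
have cf : continuous f := @continuous_powR_dist a t (- p) t0.
have mf : measurable_fun setT f := continuous_measurable_fun cf.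
have -> : [set: R] = `]-oo, a[ `|` `[a, +oo[.
  apply/seteqP; split => // s _ /=; rewrite !in_itv /= andbT.
  by case: (ltP s a) => sa; [left|right].
rewrite ge0_integral_setU //=; last 3 first.
- exact/measurable_EFinP/measurable_funTS.
- by move=> s _; rewrite lee_fin powR_ge0.
- apply/disj_setPS => s [] /=; rewrite !in_itv /= andbT => sa ase.
  by move: (lt_le_trans sa ase); rewrite ltxx.
have half b : (\int[mu]_(s in `[b, +oo[) ((s + (t - b)) `^ (- p))%:E =
    (t `^ (1 - p) / (p - 1))%:E)%E.
  by rewrite integral_powR_shift_itvy // addrC subrK.
have -> : (\int[mu]_(s in `]-oo, a[) (f s)%:E = (t `^ (1 - p) / (p - 1))%:E)%E.
  rewrite integral_itv_bndo_bndc; last exact/measurable_EFinP/measurable_funTS.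
  rewrite -{1}(opprK a) ge0_integration_by_substitutionNy; last 2 first.
  - exact: continuous_subspaceT.
  - by move=> s _; rewrite /f powR_ge0.
  rewrite -(half (- a)); apply: eq_integral => s; rewrite inE /= in_itv /= andbT => as0.
  have sa : 0 <= s + a by rewrite -lerBlDr sub0r.
  by rewrite /f /= -opprD normrN ger0_norm // opprK addrCA.
have -> : (\int[mu]_(s in `[a, +oo[) (f s)%:E = (t `^ (1 - p) / (p - 1))%:E)%E.
  rewrite -(half a); apply: eq_integral => s; rewrite inE /= in_itv /= andbT => as0.
  by rewrite /f ger0_norm ?subr_ge0 // addrCA.
by rewrite -EFinD; congr EFin; ring.
Qed.

Lemma integral_indic_itvco (a b : R) : a <= b ->
  (\int[mu]_(s in [set: R]) (\1_(`[a, b[ : set R) s)%:E = (b - a)%:E)%E.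
Proof.
move=> ab; rewrite integral_indic //= setIT lebesgue_measure_itv /=.
case: ltP => [_|]; first by rewrite EFinB.
by rewrite lee_fin => ba; rewrite (@le_anti _ _ b a) ?ab ?ba // subrr.
Qed.

End one_dimensional_integrals.

Section row_vector_norm.
Context {R : realType} {n : nat}.
Implicit Types (x : 'rV[R]_n) (c : 'I_n).

Lemma coord_le_norm x c : `|x 0 c| <= `|x|.
Proof.
rewrite [leRHS]/Num.Def.normr /= mx_normrE; apply/bigmax_geP; right => /=.
by exists (0, c).
Qed.

Lemma norm_le_coord x b :
  0 <= b -> (forall c, `|x 0 c| <= b) -> `|x| <= b.
Proof.
move=> b0 xb; rewrite [leLHS]/Num.Def.normr /= mx_normrE.
by apply: bigmax_le => // -[i c] _; rewrite (ord1 i); exact: xb.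
Qed.

Definition set_coord x c (u : R) : 'rV[R]_n :=
  \row_j (if j == c then u else x 0 j).

Lemma norm_set_coord_sub x c u v : `|set_coord x c u - set_coord x c v| <= `|u - v|.
Proof.
apply: norm_le_coord => // j; rewrite !mxE.
by case: eqP => _; rewrite ?subrr ?normr0.
Qed.

Lemma norm_sub_set_coord x c u : `|x - set_coord x c u| <= `|x 0 c - u|.
Proof.
have xE : set_coord x c (x 0 c) = x by apply/rowP => j; rewrite mxE; case: eqP => [->|].
by have := norm_set_coord_sub x c (x 0 c) u; rewrite xE.
Qed.

End row_vector_norm.

Section dyadic_cubes.
Context {R : realType} {d : nat}.
Implicit Types (w : grid_param d) (P : dcube d) (x y : 'rV[R]_d).

Definition corner w P (c : 'I_d) : R :=
  side R d P * (dpos d P c)%:~R + dshift R d w (dgen d P) 0 c.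

Lemma side_gt0 P : 0 < side R d P.
Proof. by apply: exprz_gt0; rewrite ltr0n. Qed.

Lemma cube_setP {w P x} :
  cube_set R d w P x <-> forall c, corner w P c <= x 0 c < corner w P c + side R d P.
Proof.
have upperE c : side R d P * ((dpos d P c)%:~R + 1) + dshift R d w (dgen d P) 0 c =
    corner w P c + side R d P by rewrite /corner; ring.
split=> [xP c | xP c]; first by have [-> /=] := xP c; rewrite -upperE.
by have /andP[-> /=] := xP c; rewrite upperE.
Qed.

Lemma norm_sub_centre_le {w P x} : cube_set R d w P x -> `|x - centre R d w P| <= side R d P.
Proof.
move=> /cube_setP xP; apply: norm_le_coord => [|c]; first exact/ltW/side_gt0.
have cP : centre R d w P 0 c = corner w P c + side R d P / 2.
  by rewrite [LHS]mxE /corner mulrDr addrAC.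
have /andP[lo hi] := xP c.
rewrite [(x - _) 0 c]mxE [X in x 0 c + X]mxE cP ler_norml.
by apply/andP; split; lra.
Qed.

Lemma set_coord_in_cube {w P x c u} : cube_set R d w P x ->
  corner w P c <= u < corner w P c + side R d P -> cube_set R d w P (set_coord x c u).
Proof.
move=> /cube_setP xP uP; apply/cube_setP => j; rewrite mxE.
by case: eqP => [->|_].
Qed.

Lemma set_coord_notin_cube {w P x c u} :
  ~~ (corner w P c <= u < corner w P c + side R d P) -> ~ cube_set R d w P (set_coord x c u).
Proof. by move=> uP /cube_setP /(_ c); rewrite mxE eqxx; apply/negP. Qed.

Lemma side_le_subset {w S P x} : (0 < d)%N -> cube_set R d w S x ->
  cube_set R d w S `<=` cube_set R d w P -> side R d S <= side R d P.
Proof.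
move=> d0 xS SP; pose c := Ordinal d0.
have SPc u : corner w S c <= u < corner w S c + side R d S ->
    corner w P c <= u < corner w P c + side R d P.
  move=> uS; have /cube_setP/(_ c) := SP _ (set_coord_in_cube xS uS).
  by rewrite mxE eqxx.
have sS := side_gt0 S.
have /SPc /andP[lo hi] : corner w S c <= corner w S c < corner w S c + side R d S.
  by rewrite lexx ltrDl.
rewrite leNgt; apply/negP => PS.
have /SPc /andP[_] : corner w S c <= corner w P c + side R d P < corner w S c + side R d S.
  by apply/andP; split; lra.
by rewrite ltxx.
Qed.

Lemma boundary_set_coord_corner {w P x} c : cube_set R d w P x ->
  boundary R d (cube_set R d w P) (set_coord x c (corner w P c)).
Proof.
move=> xP; have sP := side_gt0 P.
split; first by apply/subset_closure/set_coord_in_cube => //; rewrite lexx ltrDl.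
move=> /nbhs_ballP [e /= e0 /(_ (set_coord x c (corner w P c - e / 2)))] inP.
apply: (set_coord_notin_cube _ (inP _)).
  by rewrite negb_and -ltNge; apply/orP; left; lra.
rewrite -ball_normE /=; apply: le_lt_trans (norm_set_coord_sub _ _ _ _) _.
by rewrite opprB addrC subrK ger0_norm; lra.
Qed.

Lemma boundary_set_coord_corner_side {w P x} c : cube_set R d w P x ->
  boundary R d (cube_set R d w P) (set_coord x c (corner w P c + side R d P)).
Proof.
move=> xP; have sP := side_gt0 P.
split; last by move/interior_subset; apply: set_coord_notin_cube; rewrite ltxx andbF.
move=> B /nbhs_ballP [e /= e0 eB].
have [del [del0 dele dels]] : exists del, [/\ 0 < del, del < e & del <= side R d P].
  by case: (leP e (side R d P)) => es; [exists (e / 2) | exists (side R d P / 2)]; split; lra.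
exists (set_coord x c (corner w P c + side R d P - del)); split.
  by apply: set_coord_in_cube => //; apply/andP; split; lra.
apply: eB; rewrite -ball_normE /=; apply: le_lt_trans (norm_set_coord_sub _ _ _ _) _.
by rewrite opprB addrC subrK ger0_norm; lra.
Qed.

Lemma exists_boundary_closer {w P x y} : cube_set R d w P x -> ~ cube_set R d w P y ->
  exists2 z, boundary R d (cube_set R d w P) z & `|x - z| <= `|x - y|.
Proof.
move=> xP; rewrite cube_setP => /existsNP [c /negP yc].
have /cube_setP /(_ c) /andP [xlo xhi] := xP.
have xyc : `|x 0 c - y 0 c| <= `|x - y|.
  by have := coord_le_norm (x - y) c; rewrite !mxE.
move: yc; rewrite negb_and -ltNge -leNgt => /orP [ylo|yhi].
- exists (set_coord x c (corner w P c)); first exact: boundary_set_coord_corner.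
  apply: le_trans (norm_sub_set_coord _ _ _) (le_trans _ xyc).
  by rewrite !ger0_norm; lra.
- exists (set_coord x c (corner w P c + side R d P)).
    exact: boundary_set_coord_corner_side.
  apply: le_trans (norm_sub_set_coord _ _ _) (le_trans _ xyc).
  by rewrite ler0_norm ?ltr0_norm; lra.
Qed.

Lemma good_lt_dist {w gamma r S P x y} : good R d w gamma r S ->
  (2%:R : R) ^+ r * side R d S <= side R d P -> cube_set R d w S x ->
  cube_set R d w S `<=` cube_set R d w P -> ~ cube_set R d w P y ->
  side R d S `^ gamma * side R d P `^ (1 - gamma) < `|x - y|.
Proof.
move=> Sgood SP xS sSP yP.
have [z zP xz] := exists_boundary_closer (sSP _ xS) yP.
apply: lt_le_trans xz; rewrite -lte_fin.
apply: lt_le_trans (Sgood _ SP) _; apply: ereal_inf_lbound.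
by exists x => //; exists z.
Qed.

End dyadic_cubes.

Lemma ler_powRN (R : realType) (a b p : R) : 0 < a -> a <= b -> 0 <= p ->
  b `^ (- p) <= a `^ (- p).
Proof.
move=> a0 ab p0; have b0 := lt_le_trans a0 ab.
rewrite !powRN lef_pV2 ?posrE ?powR_gt0 //.
by apply: ge0_ler_powR; rewrite // nnegrE ltW.
Qed.

Lemma ler_mul_norm_le1 (R : realDomainType) (k b u : R) :
  0 <= k -> 0 <= b -> `|u| <= 1 -> (u != 0 -> k <= b) -> k * `|u| <= b.
Proof.
move=> k0 b0 u1 kb; have [->|/kb kb'] := eqVneq u 0; first by rewrite normr0 mulr0.
by apply: le_trans kb'; rewrite ler_piMr.
Qed.

Section kernel_estimates.
Variables (R : realType) (d : nat) (alpha t : R).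
Hypotheses (d_gt0 : (0 < d)%N) (alpha_gt0 : 0 < alpha) (t_gt0 : 0 < t).

(* [Kop R d w alpha t S f x] is the integral of [kernel x (centre R d w S) y * `|f y|]. *)
Definition kernel (x c y : 'rV[R]_d) : R :=
  (t * `|x - c|) `^ (alpha / 2) / (t + `|x - y|) `^ (alpha + d%:R).

Let beta := 1 + alpha / (2 * d%:R).

Let beta_gt1 : 1 < beta.
Proof. by rewrite ltrDl divr_gt0 // mulr_gt0 // ltr0n. Qed.

Let t_addr_gt0 {u : R} : 0 <= u -> 0 < t + u.
Proof. by move=> u0; rewrite ltr_pwDl. Qed.

Lemma kernel_ge0 x c y : 0 <= kernel x c y.
Proof. by rewrite divr_ge0 ?powR_ge0. Qed.

Lemma kernel_num_le (x c : 'rV[R]_d) h : `|x - c| <= h ->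
  (t * `|x - c|) `^ (alpha / 2) <= (t * h) `^ (alpha / 2).
Proof.
move=> xc; apply: ge0_ler_powR.
- by rewrite divr_ge0 ?ltW.
- by rewrite nnegrE mulr_ge0 // ltW.
- by rewrite nnegrE mulr_ge0 ?(le_trans _ xc) // ltW.
- by rewrite ler_pM2l.
Qed.

Lemma kernel_le_far x c y (m h : R) : 0 < m -> m <= t + `|x - y| -> `|x - c| <= h ->
  kernel x c y <= (t * h) `^ (alpha / 2) * m `^ (- (alpha / 2)) *
                  \prod_(i < d) (t + `|y 0 i - x 0 i|) `^ (- beta).
Proof.
move=> m0 mxy xc; rewrite /kernel -mulrA -powRN.
apply: ler_pM; rewrite ?powR_ge0 ?kernel_num_le //.
have dE : - (alpha + d%:R) = - (alpha / 2) + (- beta) * d%:R.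
  by rewrite /beta; field; rewrite pnatr_eq0 -lt0n.
have txy := t_addr_gt0 (normr_ge0 (x - y)).
rewrite dE powRD ?(gt_eqF txy) ?implybT // powRrM powR_mulrn ?powR_ge0 //.
apply: ler_pM; [exact: powR_ge0 | exact/exprn_ge0/powR_ge0 | |].
  by apply: ler_powRN => //; rewrite divr_ge0 // ltW.
rewrite -[X in _ ^+ X]card_ord -prodr_const; apply: ler_prod => i _.
rewrite powR_ge0 /=; apply: ler_powRN.
- exact: t_addr_gt0.
- by rewrite lerD2l distrC; have := coord_le_norm (x - y) i; rewrite !mxE.
- exact/ltW/(lt_trans ltr01 beta_gt1).
Qed.

Lemma kernel_le_near x c y h : `|x - c| <= h ->
  kernel x c y <= (t * h) `^ (alpha / 2) * t `^ (- (alpha + d%:R)).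
Proof.
move=> xc; rewrite /kernel -powRN.
apply: ler_pM; rewrite ?powR_ge0 ?kernel_num_le //.
by apply: ler_powRN; rewrite ?lerDl // addr_ge0 // ltW.
Qed.

End kernel_estimates.

Lemma powR_gt0E (R : realType) (a p : R) : 0 < a -> a `^ p = expR (p * ln a).
Proof. by move=> a0; rewrite /powR gt_eqF. Qed.

Section Kop_estimates.
Context {R : realType} {d : nat} {alpha t : R}.
Hypotheses (d_gt0 : (0 < d)%N) (alpha_gt0 : 0 < alpha) (t_gt0 : 0 < t).

Lemma far_bound_simpl (h m : R) : 0 < h -> 0 < m ->
  let beta := 1 + alpha / (2 * d%:R) in
  (t * h) `^ (alpha / 2) * m `^ (- (alpha / 2)) * (2 / (beta - 1) * t `^ (1 - beta)) ^+ d
  = (4 * d%:R / alpha) ^+ d * (h / m) `^ (alpha / 2).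
Proof.
move=> h0 m0 beta; have dn0 : (d%:R : R) != 0 by rewrite pnatr_eq0 -lt0n.
have -> : 2 / (beta - 1) = 4 * d%:R / alpha by rewrite /beta; field; rewrite gt_eqF.
rewrite exprMn [LHS]mulrCA; congr (_ * _).
rewrite !powR_gt0E ?mulr_gt0 ?divr_gt0 ?invr_gt0 // -expRM_natl -!expRD.
rewrite lnM ?ln_div ?posrE //.
by congr expR; rewrite /beta; field.
Qed.

Lemma Kop_far_le {w S} {f : 'rV[R]_d -> R} {x m h} : 0 < m -> 0 < h ->
  (forall y, f y != 0 -> m <= t + `|x - y|) -> (forall y, `|f y| <= 1) ->
  `|x - centre R d w S| <= h ->
  (Kop R d w alpha t S f x <= ((4 * d%:R / alpha) ^+ d * (h / m) `^ (alpha / 2))%:E)%E.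
Proof.
move=> m0 h0 fm f1 xc; rewrite /Kop -far_bound_simpl //.
set beta := 1 + alpha / (2 * d%:R).
have beta_gt1 : 1 < beta by rewrite ltrDl divr_gt0 // mulr_gt0 // ltr0n.
pose g i s := (t + `|s - x 0 i|) `^ (- beta).
apply: le_trans (@le_int_Rd R d _
  (fun y => ((t * h) `^ (alpha / 2) * m `^ (- (alpha / 2)) * \prod_(i < d) g i (y 0 i))%:E) _ _) _.
- by move=> y; rewrite lee_fin; apply: mulr_ge0 => //; exact: kernel_ge0.
- move=> y; rewrite lee_fin; apply: ler_mul_norm_le1 => //.
  + exact: kernel_ge0.
  + by rewrite !mulr_ge0 ?powR_ge0 // prodr_ge0 // => i _; rewrite powR_ge0.
  + by move=> /fm fy; apply: kernel_le_far.
rewrite int_Rd_prod ?mulr_ge0 ?powR_ge0 //; last 2 first.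
- by move=> i s; rewrite powR_ge0.
- by move=> i; apply: continuous_measurable_fun; exact: continuous_powR_dist.
under eq_bigr do rewrite integral_powR_dist //.
by rewrite prodEFin prodr_const card_ord -EFinM.
Qed.

Lemma Kop_near_le {w S} {f : 'rV[R]_d -> R} {x h q} {a : 'I_d -> R} : 0 <= q ->
  (forall y, f y != 0 -> forall i, a i <= y 0 i < a i + q) -> (forall y, `|f y| <= 1) ->
  `|x - centre R d w S| <= h ->
  (Kop R d w alpha t S f x <= ((t * h) `^ (alpha / 2) * t `^ (- (alpha + d%:R)) * q ^+ d)%:E)%E.
Proof.
move=> q0 fa f1 xc; rewrite /Kop.
pose g i s : R := \1_(`[a i, a i + q[ : set R) s.
apply: le_trans (@le_int_Rd R d _
  (fun y => ((t * h) `^ (alpha / 2) * t `^ (- (alpha + d%:R)) * \prod_(i < d) g i (y 0 i))%:E) _ _) _.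
- by move=> y; rewrite lee_fin; apply: mulr_ge0 => //; exact: kernel_ge0.
- move=> y; rewrite lee_fin; apply: ler_mul_norm_le1 => //.
  + exact: kernel_ge0.
  + by rewrite !mulr_ge0 ?powR_ge0 // prodr_ge0 // => i _; rewrite /g indicE.
  + move=> /fa ya; rewrite big1 ?mulr1; first exact: kernel_le_near.
    by move=> i _; rewrite /g indicE mem_set //= in_itv /= ya.
rewrite int_Rd_prod; last 3 first.
- by rewrite mulr_ge0 ?powR_ge0.
- by move=> i s; rewrite /g indicE.
- by move=> i; exact: measurable_indic.
under eq_bigr do rewrite integral_indic_itvco ?lerDl // (addrC (a _)) addrK.
by rewrite prodEFin prodr_const card_ord -EFinM.
Qed.

End Kop_estimates.

Section decay_arithmetic.
Context {R : realType} {alpha : R}.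
Hypothesis alpha_gt0 : 0 < alpha.

Lemma far_decay_small_cube (h t L : R) (r : nat) : 0 < h -> h <= L -> L / 2 < t ->
  (h / t) `^ (alpha / 2) <=
  2 `^ (alpha / 2 + alpha / 4 * r%:R) * (h / (2 ^+ r * L)) `^ (alpha / 4).
Proof.
move=> h0 hL Lt; have L0 := lt_le_trans h0 hL.
have t0 : 0 < t by apply: lt_trans Lt; rewrite divr_gt0.
rewrite !powR_gt0E ?divr_gt0 ?mulr_gt0 ?exprn_gt0 // -expRD ler_expR.
rewrite !ln_div ?lnM ?lnXn ?posrE ?mulr_gt0 ?exprn_gt0 // -[ln 2 *+ r]mulr_natr.
have lnhL : ln h <= ln L by rewrite ler_ln ?posrE.
have lnLt : ln L - ln 2 <= ln t by rewrite -ln_div ?posrE // ler_ln ?posrE ?divr_gt0 // ltW.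
have : 0 <= alpha * (ln L - ln h) by apply: mulr_ge0; [exact: ltW | lra].
have : 0 <= alpha * (ln t - ln L + ln 2) by apply: mulr_ge0; [exact: ltW | lra].
nra.
Qed.

Lemma far_decay_large_cube {h q gamma : R} : 0 < h -> h <= q -> 0 <= gamma -> gamma <= 2^-1 ->
  (h / (h `^ gamma * q `^ (1 - gamma))) `^ (alpha / 2) <= (h / q) `^ (alpha / 4).
Proof.
move=> h0 hq g0 g1; have q0 := lt_le_trans h0 hq.
rewrite !powR_gt0E ?divr_gt0 ?mulr_gt0 ?expR_gt0 // ler_expR.
rewrite !ln_div ?lnM ?posrE ?mulr_gt0 ?expR_gt0 // !expRK.
have lnhq : ln h <= ln q by rewrite ler_ln ?posrE.
have : 0 <= (alpha * (1 - 2 * gamma)) * (ln q - ln h).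
  by apply: mulr_ge0; [apply: mulr_ge0; [exact: ltW | lra] | lra].
nra.
Qed.

Lemma near_decay (d : nat) (h q t L : R) : 0 < h -> 0 < q -> 0 < L -> L / 2 < t ->
  (t * h) `^ (alpha / 2) * t `^ (- (alpha + d%:R)) * q ^+ d <=
  2 `^ (alpha / 2 + d%:R) * (q ^+ d / L ^+ d) * (h / L) `^ (alpha / 2).
Proof.
move=> h0 q0 L0 Lt; have t0 : 0 < t by apply: lt_trans Lt; rewrite divr_gt0.
rewrite -!powR_mulrn ?(ltW q0) ?(ltW L0) //.
rewrite !powR_gt0E ?divr_gt0 ?mulr_gt0 // -!expRD -expRB -!expRD ler_expR.
rewrite !ln_div ?lnM ?posrE ?mulr_gt0 //.
have lnLt : ln L - ln 2 <= ln t by rewrite -ln_div ?posrE // ler_ln ?posrE ?divr_gt0 // ltW.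
have : 0 <= (alpha / 2 + d%:R) * (ln t - ln L + ln 2).
  by apply: mulr_ge0; [rewrite addr_ge0 ?divr_ge0 // ltW | lra].
nra.
Qed.

End decay_arithmetic.

Lemma norm_indic_le1 {R : realDomainType} {T} (A : set T) (y : T) : `|(\1_A y : R)| <= 1.
Proof. by rewrite indicE; case: (y \in A); rewrite ?normr1 ?normr0. Qed.

Section lemma7p4_estimates.
Context {R : realType} {d : nat} {alpha t : R} {w : grid_param d} {S' Rc Q : dcube d}.
Context {x : 'rV[R]_d}.
Hypotheses (d_gt0 : (0 < d)%N) (alpha_gt0 : 0 < alpha).
Hypotheses (SR : cube_set R d w S' `<=` cube_set R d w Rc) (xS : cube_set R d w S' x).
Hypotheses (SQ : cube_set R d w S' `<=` cube_set R d w Q) (Lt : side R d Rc / 2 < t).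

Let h_gt0 : 0 < side R d S' := side_gt0 S'.
Let L_gt0 : 0 < side R d Rc := side_gt0 Rc.
Let q_gt0 : 0 < side R d Q := side_gt0 Q.
Let t_gt0 : 0 < t. Proof. by apply: lt_trans Lt; rewrite divr_gt0. Qed.
Let hL : side R d S' <= side R d Rc. Proof. exact: side_le_subset d_gt0 xS SR. Qed.
Let xc := norm_sub_centre_le xS.

Let cd_gt0 : 0 < (4 * d%:R / alpha) ^+ d.
Proof. by rewrite exprn_gt0 // divr_gt0 // mulr_gt0 // ltr0n. Qed.

Let compl_le1 y : `|(\1_(~` cube_set R d w Q) y : R)| <= 1.
Proof. exact: norm_indic_le1. Qed.

Lemma Kop_compl_le_ancestor r :
  (Kop R d w alpha t S' (\1_(~` cube_set R d w Q)) x <=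
   ((4 * d%:R / alpha) ^+ d * 2 `^ (alpha / 2 + alpha / 4 * r%:R) *
    (side R d S' / (2 ^+ r * side R d Rc)) `^ (alpha / 4))%:E)%E.
Proof.
have ft y : \1_(~` cube_set R d w Q) y != 0 :> R -> t <= t + `|x - y| by rewrite lerDl.
apply: le_trans (Kop_far_le d_gt0 alpha_gt0 t_gt0 t_gt0 h_gt0 ft compl_le1 xc) _.
by rewrite lee_fin -[leRHS]mulrA ler_pM2l // far_decay_small_cube.
Qed.

Lemma Kop_compl_le_cube {r} : good R d w (alpha / (4 * alpha + 4 * d%:R)) r S' ->
  2 ^+ r * side R d Rc < side R d Q ->
  (Kop R d w alpha t S' (\1_(~` cube_set R d w Q)) x <=
   ((4 * d%:R / alpha) ^+ d * 2 `^ (alpha / 2 + alpha / 4 * r%:R) *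
    (side R d S' / side R d Q) `^ (alpha / 4))%:E)%E.
Proof.
move=> S'good Qlarge; set gamma := alpha / (4 * alpha + 4 * d%:R).
have gamma_ge0 : 0 <= gamma.
  by apply: divr_ge0; [exact: ltW | rewrite addr_ge0 ?mulr_ge0 // ltW].
have gamma_le : gamma <= 2^-1.
  have d0 : 0 <= 4 * d%:R :> R by rewrite mulr_ge0.
  have : alpha <= 2^-1 * (4 * alpha + 4 * d%:R) by move: alpha_gt0 d0; lra.
  by rewrite ler_pdivrMr ?addr_gt0 ?mulr_gt0 ?ltr0n.
have hq : 2 ^+ r * side R d S' <= side R d Q.
  by apply/ltW/(le_lt_trans _ Qlarge); rewrite ler_pM2l ?exprn_gt0.
have hq' : side R d S' <= side R d Q.
  by apply: le_trans hq; rewrite ler_peMl ?exprn_ege1 ?ler1n ?(ltW h_gt0).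
have m0 : 0 < side R d S' `^ gamma * side R d Q `^ (1 - gamma).
  by rewrite mulr_gt0 ?powR_gt0.
have fm y : \1_(~` cube_set R d w Q) y != 0 :> R ->
    side R d S' `^ gamma * side R d Q `^ (1 - gamma) <= t + `|x - y|.
  rewrite indicE pnatr_eq0 eqb0 negbK => /set_mem yQ.
  by apply/ltW/(lt_le_trans (good_lt_dist S'good hq xS SQ yQ)); rewrite lerDr ltW.
apply: le_trans (Kop_far_le d_gt0 alpha_gt0 t_gt0 m0 h_gt0 fm compl_le1 xc) _.
rewrite lee_fin -[leRHS]mulrA ler_pM2l //.
apply: le_trans (far_decay_large_cube alpha_gt0 h_gt0 hq' gamma_ge0 gamma_le) _.
rewrite ler_peMl ?powR_ge0 //.
have e0 : 0 <= alpha / 2 + alpha / 4 * r%:R.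
  by apply: addr_ge0; [|apply: mulr_ge0]; rewrite ?divr_ge0 // ltW.
by have := ler_powR (ler1n R 2) e0; rewrite powRr0.
Qed.

Lemma Kop_compl_le {r} : good R d w (alpha / (4 * alpha + 4 * d%:R)) r S' ->
  (Kop R d w alpha t S' (\1_(~` cube_set R d w Q)) x <=
   ((4 * d%:R / alpha) ^+ d * 2 `^ (alpha / 2 + alpha / 4 * r%:R) *
    (side R d S' / Num.max (2 ^+ r * side R d Rc) (side R d Q)) `^ (alpha / 4))%:E)%E.
Proof.
move=> S'good; have [_|Qlarge] := leP (side R d Q) (2 ^+ r * side R d Rc).
- exact: Kop_compl_le_ancestor.
- exact: Kop_compl_le_cube.
Qed.

Lemma Kop_cube_le :
  (Kop R d w alpha t S' (\1_(cube_set R d w Q)) x <=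
   (2 `^ (alpha / 2 + d%:R) * (side R d Q ^+ d / side R d Rc ^+ d) *
    (side R d S' / side R d Rc) `^ (alpha / 2))%:E)%E.
Proof.
have fQ y : \1_(cube_set R d w Q) y != 0 :> R ->
    forall c, corner w Q c <= y 0 c < corner w Q c + side R d Q.
  by rewrite indicE pnatr_eq0 eqb0 negbK => /set_mem /cube_setP.
apply: le_trans (Kop_near_le alpha_gt0 t_gt0 (ltW q_gt0) fQ (norm_indic_le1 _) xc) _.
by rewrite lee_fin near_decay.
Qed.

End lemma7p4_estimates.

Theorem lemma7p4 (R : realType) (d : nat) (alpha : R) :
  (0 < d)%N -> 0 < alpha <= 1 ->
  exists2 eta : R, 0 < eta &
  forall r : nat, exists2 C : R, 0 < C &
  forall (w : grid_param d) (S' Rc Q : dcube d) (x : 'rV[R]_d) (t : R),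
    cube_set R d w S' `<=` cube_set R d w Rc ->
    good R d w (alpha / (4%:R * alpha + 4%:R * d%:R)) r S' ->
    x \in cube_set R d w S' ->
    side R d Rc / 2%:R < t < side R d Rc ->
    cube_set R d w S' `<=` cube_set R d w Q ->
    (Kop R d w alpha t S' (\1_(~` cube_set R d w Q)) x
       <= (C * (side R d S' / Num.max ((2%:R : R) ^+ r * side R d Rc) (side R d Q))
                 `^ eta)%:E)%E /\
    (Kop R d w alpha t S' (\1_(cube_set R d w Q)) x
       <= (C * (side R d Q ^+ d / side R d Rc ^+ d)
             * (side R d S' / side R d Rc) `^ (alpha / 2%:R))%:E)%E.
Proof.
move=> d_gt0 /andP[alpha_gt0 _].
exists (alpha / 4); first by rewrite divr_gt0.
move=> r; set C1 := (4 * d%:R / alpha) ^+ d * 2 `^ (alpha / 2 + alpha / 4 * r%:R).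
set C2 : R := 2 `^ (alpha / 2 + d%:R).
have C1_gt0 : 0 < C1 by rewrite mulr_gt0 ?powR_gt0 // exprn_gt0 // divr_gt0 // mulr_gt0 // ltr0n.
have C2_gt0 : 0 < C2 by rewrite powR_gt0.
exists (C1 + C2); first exact: addr_gt0.
move=> w S' Rc Q x t SR S'good /set_mem xS /andP[Lt _] SQ; split.
- apply: le_trans (Kop_compl_le d_gt0 alpha_gt0 SR xS SQ Lt S'good) _.
  by rewrite lee_fin ler_wpM2r ?powR_ge0 // lerDl ltW.
- apply: le_trans (Kop_cube_le alpha_gt0 xS Lt) _.
  rewrite lee_fin -!mulrA ler_wpM2r ?lerDr ?(ltW C1_gt0) //.
  apply: mulr_ge0; first exact/exprn_ge0/ltW/side_gt0.
  by rewrite mulr_ge0 ?powR_ge0 // invr_ge0 exprn_ge0 // ltW // side_gt0.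
Qed.
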